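(* For every integer $k\ge 0$ there is a finite set $\mathcal F_k$ of bipartite graphs such that for every graph $G$, $\overline{\mu_\alpha}(G)\le k$ if and only if $G$ is $\mathcal F_k$-free.
   Context: All graphs are finite, simple and undirected. For a graph $G$, $\alpha(G)$ is the maximum size of an independent set and $i(G)$ is the minimum size of a maximal (with respect to inclusion) independent set; the independence gap is $\mu_\alpha(G)=\alpha(G)-i(G)$. The hereditary independence gap is $\overline{\mu_\alpha}(G)=\max\{\mu_\alpha(H): H \text{ an induced subgraph of } G\}$. For a set $\mathcal F$ of graphs, $G$ is $\mathcal F$-free if no induced subgraph of $G$ is isomorphic to a member of $\mathcal F$. *)

From mathcomp Require Import all_boot.
From Stdlib Require List.
Set Implicit Arguments. Unset Strict Implicit. Unset Printing Implicit Defensive.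

Record sgraph := SGraph {
  sg_n : nat;
  sg_adj : rel 'I_sg_n;
  sg_sym : symmetric sg_adj;
  sg_irr : irreflexive sg_adj }.

Section Graphs.
Variables (T : finType) (e : rel T).

Definition indep (A : {set T}) : bool :=
  [forall x in A, forall y in A, ~~ e x y].

Definition maximal_indep_in (S A : {set T}) : bool :=
  [&& A \subset S, indep A &
      [forall B : {set T}, (A \subset B) && (B \subset S) && indep B ==> (B == A)]].

Definition alpha_in (S : {set T}) : nat :=
  \max_(A : {set T} | (A \subset S) && indep A) #|A|.

(* i(G[S]) : minimum size of a maximal independent set of G[S]
   (maximal independent sets always exist, so the default #|S| is never the only value). *)
Definition indep_dom_in (S : {set T}) : nat :=
  \big[minn/#|S|]_(A : {set T} | maximal_indep_in S A) #|A|.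

(* mu_alpha(G[S]) = alpha(G[S]) - i(G[S]) (nonnegative, so truncation is harmless). *)
Definition mu_alpha_in (S : {set T}) : nat := alpha_in S - indep_dom_in S.

Definition her_mu_alpha : nat := \max_(S : {set T}) mu_alpha_in S.

Definition induced_copy (H : sgraph) : Prop :=
  exists f : 'I_(sg_n H) -> T,
    injective f /\ forall x y, e (f x) (f y) = @sg_adj H x y.

Definition graph_free (F : list sgraph) : Prop :=
  forall H, List.In H F -> ~ induced_copy H.

End Graphs.

Definition bipartite (H : sgraph) : Prop :=
  exists c : 'I_(sg_n H) -> bool, forall x y, @sg_adj H x y -> c x != c y.

(* The hereditary gap exceeds k exactly when the graph contains a gap witness:
   independent sets X and Y such that every vertex of X has a neighbour in Y and
   |X| > |Y| + k.  From an induced subgraph with a maximum independent set A and a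
   minimum maximal independent set I take X = A \ I and Y = I \ A; conversely Y is
   a maximal independent set of G[X u Y].  A witness with |X| + |Y| > 3k + 3 can be
   shrunk: drop vertices of X while |X| > |Y| + k + 1; then |X| < 2|Y|, so once a
   neighbour in Y is fixed for every vertex of X, some y in Y is chosen by at most
   one vertex of X, and both can be deleted.  Hence F_k can be taken to be the
   graphs on at most 3k + 3 vertices covered by a gap witness; they are bipartite
   with colour classes X and Y. *)

From mathcomp Require Import all_boot all_order zify.
From Stdlib Require List.
Set Implicit Arguments. Unset Strict Implicit. Unset Printing Implicit Defensive.
Import Order.TTheory.

Section IndependenceGap.
Variables (T : finType) (e : rel T).

Definition dominates (Y X : {set T}) : bool := [forall x in X, exists y in Y, e x y].

Definition gap_witness k (X Y : {set T}) : bool :=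
  [&& indep e X, indep e Y, dominates Y X & #|Y| + k < #|X|].

Lemma indepP (A : {set T}) : reflect {in A &, forall x y, e x y = false} (indep e A).
Proof.
apply: (iffP forall_inP) => [h x y xA yA | h x xA].
  exact/negbTE/(forall_inP (h x xA)).
by apply/forall_inP => y yA; rewrite h.
Qed.

Lemma indepF (A : {set T}) x y : indep e A -> x \in A -> y \in A -> e x y = false.
Proof. by move/indepP; apply. Qed.

Lemma indepS (A B : {set T}) : B \subset A -> indep e A -> indep e B.
Proof. by move=> sBA /indepP iA; apply/indepP => x y xB yB; rewrite iA ?(subsetP sBA). Qed.

Lemma dominatesP (Y X : {set T}) :
  reflect {in X, forall x, exists2 y, y \in Y & e x y} (dominates Y X).
Proof.
apply: (iffP forall_inP) => [h x /h /exists_inP // | h x /h [y yY exy]].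
by apply/exists_inP; exists y.
Qed.

Lemma dominatesS (Y X X' : {set T}) : X' \subset X -> dominates Y X -> dominates Y X'.
Proof. by move=> sX /dominatesP dX; apply/dominatesP => x /(subsetP sX)/dX. Qed.

Lemma dominates_shrink (Y X : {set T}) : dominates Y X -> #|X| < 2 * #|Y| ->
  exists2 y, y \in Y & exists2 Z : {set T}, #|Z| <= 1 & dominates (Y :\ y) (X :\: Z).
Proof.
move=> /dominatesP dYX ltXY.
pose g x := odflt x [pick y in Y | e x y].
have gP x : x \in X -> (g x \in Y) && e x (g x).
  move=> /dYX [y yY exy]; rewrite /g; case: pickP => [z /andP [-> ->] // | /(_ y)].
  by rewrite yY exy.
pose Z y := [set x in X | g x == y].
have [y yY smallZ] : exists2 y, y \in Y & #|Z y| <= 1.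
  apply/exists_inP; apply: contraLR ltXY => /exists_inPn bigZ.
  have -> : #|X| = \sum_(y in Y) #|Z y|.
    rewrite -sum1_card (partition_big g (mem Y)) => [|x /gP /andP []//].
    by apply: eq_bigr => y _; rewrite sum1dep_card; apply: eq_card => x; rewrite !inE.
  rewrite -leqNgt mulnC -sum_nat_const; apply: leq_sum => z zY.
  by rewrite ltnNge bigZ.
exists y => //; exists (Z y) => //.
apply/dominatesP => x /setDP [xX xZ]; have /andP [gY exg] := gP x xX.
exists (g x) => //; rewrite !inE gY andbT.
by apply: contraNneq xZ => <-; rewrite inE xX eqxx.
Qed.

Lemma gap_witness_shrink k (X Y : {set T}) :
  gap_witness k X Y -> 3 * k + 3 < #|X| + #|Y| ->
  exists X' Y', gap_witness k X' Y' /\ #|X'| + #|Y'| < #|X| + #|Y|.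
Proof.
case/and4P => iX iY dYX ltYX big.
have [ltYX1 | leXY1] := ltnP (#|Y| + k.+1) #|X|.
  have /card_gt0P [x xX] : 0 < #|X| by lia.
  have := cardsD1 x X; rewrite xX => cX.
  exists (X :\ x), Y; split; last by lia.
  apply/and4P; split=> //; last by lia.
  - exact: indepS (subsetDl _ _) iX.
  - exact: dominatesS (subsetDl _ _) dYX.
have [y yY [Z smallZ dYX']] := dominates_shrink dYX (ltac:(lia)).
have := cardsD1 y Y; rewrite yY => cY.
have := cardsID Z X; have := subset_leq_card (subsetIr X Z) => cXZ cX.
exists (X :\: Z), (Y :\ y); split; last by lia.
apply/and4P; split=> //; last by lia.
- exact: indepS (subsetDl _ _) iX.
- exact: indepS (subsetDl _ _) iY.
Qed.

Lemma gap_witness_small k (X Y : {set T}) : gap_witness k X Y ->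
  exists X' Y', gap_witness k X' Y' /\ #|X'| + #|Y'| <= 3 * k + 3.
Proof.
have [n] := ubnP (#|X| + #|Y|); elim: n X Y => // n IH X Y ltXYn wXY.
have [small | big] := leqP (#|X| + #|Y|) (3 * k + 3); first by exists X, Y.
have [X' [Y' [wXY' lt]]] := gap_witness_shrink wXY big.
by apply: IH wXY'; lia.
Qed.

Lemma alpha_in_ge (S A : {set T}) : A \subset S -> indep e A -> #|A| <= alpha_in e S.
Proof.
by move=> sAS iA; apply: (@leq_bigmax_cond _ _ (fun B : {set T} => #|B|) A); rewrite sAS.
Qed.

Lemma alpha_in_attained (S : {set T}) :
  exists2 A : {set T}, (A \subset S) && indep e A & alpha_in e S = #|A|.
Proof.
have ne : 0 < #|[pred A : {set T} | (A \subset S) && indep e A]|.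
  by apply/card_gt0P; exists set0; rewrite inE sub0set; apply/indepP => x; rewrite inE.
by have [A] := eq_bigmax_cond (fun A : {set T} => #|A|) ne; exists A.
Qed.

Lemma indep_dom_in_le (S I : {set T}) : maximal_indep_in e S I -> indep_dom_in e S <= #|I|.
Proof. by move=> mI; rewrite /indep_dom_in -minEnat -leEnat bigmin_le_cond. Qed.

Lemma indep_dom_inP (S : {set T}) :
  indep_dom_in e S = #|S| \/ exists2 I, maximal_indep_in e S I & indep_dom_in e S = #|I|.
Proof.
apply: (big_ind (fun m => m = #|S| \/ exists2 I, maximal_indep_in e S I & m = #|I|)).
- by left.
- by move=> m n; rewrite /minn; case: ltnP.
- by move=> I mI; right; exists I.
Qed.

Lemma mu_alpha_in_le_her (S : {set T}) : mu_alpha_in e S <= her_mu_alpha e.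
Proof. exact: (@leq_bigmax_cond _ xpredT (mu_alpha_in e)). Qed.

Lemma her_mu_alpha_attained : exists S, her_mu_alpha e = mu_alpha_in e S.
Proof.
have ne : 0 < #|(xpredT : pred {set T})| by apply/card_gt0P; exists set0.
by have [S _ hS] := @eq_bigmax_cond _ xpredT (mu_alpha_in e) ne; exists S.
Qed.

Hypothesis e_sym : symmetric e.
Hypothesis e_irr : irreflexive e.

Lemma maximal_indep_inE (S I : {set T}) : I \subset S -> indep e I ->
  maximal_indep_in e S I = dominates I (S :\: I).
Proof.
move=> sIS iI; rewrite /maximal_indep_in sIS iI /=.
apply/forallP/dominatesP => [mI x /setDP [xS xI] | dI B].
  have : ~~ indep e (x |: I).
    apply: contra xI => ixI; have /implyP := mI (x |: I).
    by rewrite subsetUr subUset sub1set xS sIS ixI => /(_ isT) /eqP <-; rewrite setU11.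
  case/forallPn => u; rewrite negb_imply => /andP [uxI /forallPn [v]].
  rewrite negb_imply negbK => /andP [vxI euv].
  move: uxI vxI; rewrite !in_setU1 => /predU1P [ux | uI] /predU1P [vx | vI].
  - by rewrite ux vx e_irr in euv.
  - by exists v; rewrite // -ux.
  - by exists u; rewrite // -vx e_sym.
  - by rewrite (indepF iI uI vI) in euv.
apply/implyP => /andP [/andP [sIB sBS] iB]; rewrite eqEsubset sIB andbT.
apply/subsetP => b bB; apply: contraT => bI.
have [y yI eby] : exists2 y, y \in I & e b y by apply: dI; rewrite inE bI (subsetP sBS).
by rewrite (indepF iB bB (subsetP sIB y yI)) in eby.
Qed.

Lemma gap_witness_her_gt k (X Y : {set T}) : gap_witness k X Y -> k < her_mu_alpha e.
Proof.
case/and4P => iX iY dYX ltYX; set S := X :|: Y.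
have alphaS : #|X| <= alpha_in e S by apply: alpha_in_ge; rewrite ?subsetUl.
have maxY : maximal_indep_in e S Y.
  rewrite maximal_indep_inE ?subsetUr //; apply: dominatesS dYX.
  by rewrite setDUl setDv setU0 subsetDl.
have := mu_alpha_in_le_her S; have := indep_dom_in_le maxY; rewrite /mu_alpha_in; lia.
Qed.

Lemma her_gt_gap_witness k : k < her_mu_alpha e -> exists X Y, gap_witness k X Y.
Proof.
have [S ->] := her_mu_alpha_attained; rewrite /mu_alpha_in => gapS.
have [A /andP [sAS iA] alphaS] := alpha_in_attained S.
have [iS | [I maxI iS]] := indep_dom_inP S.
  by have := subset_leq_card sAS; lia.
move: (maxI) => /and3P [sIS iI _].
exists (A :\: I), (I :\: A); apply/and4P; split.
- exact: indepS (subsetDl _ _) iA.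
- exact: indepS (subsetDl _ _) iI.
- apply/dominatesP => x /setDP [xA xI].
  move: maxI; rewrite maximal_indep_inE // => /dominatesP/(_ x).
  rewrite inE xI (subsetP sAS) // => /(_ isT) [y yI exy].
  by exists y; rewrite // inE yI andbT; apply: contraTN exy => yA; rewrite (indepF iA xA yA).
- have := cardsID I A; have := cardsID A I; rewrite setIC; lia.
Qed.

End IndependenceGap.

Section InducedEmbedding.
Variables (T1 T2 : finType) (e1 : rel T1) (e2 : rel T2) (f : T1 -> T2).
Hypothesis f_inj : injective f.
Hypothesis f_adj : forall x y, e2 (f x) (f y) = e1 x y.

Lemma indep_imset (A : {set T1}) : indep e2 (f @: A) = indep e1 A.
Proof.
apply/indepP/indepP => iA x y; first by move=> xA yA; rewrite -f_adj iA ?imset_f.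
by case/imsetP=> a aA -> /imsetP [b bA ->]; rewrite f_adj iA.
Qed.

Lemma dominates_imset (Y X : {set T1}) : dominates e2 (f @: Y) (f @: X) = dominates e1 Y X.
Proof.
apply/dominatesP/dominatesP => dYX x.
  move=> xX; have [_ /imsetP [y yY ->] exy] := dYX (f x) (imset_f f xX).
  by exists y; rewrite -?f_adj.
case/imsetP=> a aX ->; have [y yY eay] := dYX a aX.
by exists (f y); rewrite ?imset_f ?f_adj.
Qed.

Lemma gap_witness_imset k (X Y : {set T1}) :
  gap_witness e2 k (f @: X) (f @: Y) = gap_witness e1 k X Y.
Proof. by rewrite /gap_witness !indep_imset dominates_imset !card_imset. Qed.

End InducedEmbedding.

Lemma imset_preimset (aT rT : finType) (f : aT -> rT) (B : {set rT}) :
  B \subset codom f -> f @: (f @^-1: B) = B.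
Proof.
move=> sB; apply/setP => y; apply/imsetP/idP => [[x + ->] | yB]; first by rewrite inE.
by have /codomP [x yx] := subsetP sB y yB; exists x; rewrite // inE -yx.
Qed.

Lemma mem_ListIn (T : eqType) (x : T) (s : seq T) : x \in s -> List.In x s.
Proof. by elim: s => //= y s IH; rewrite inE => /predU1P [<- | /IH]; [left | right]. Qed.

Definition sym_adj n (A : {ffun 'I_n * 'I_n -> bool}) : rel 'I_n :=
  fun i j => [&& i != j, A (i, j) & A (j, i)].

Lemma sym_adj_sym n (A : {ffun 'I_n * 'I_n -> bool}) : symmetric (sym_adj A).
Proof. by move=> i j; rewrite /sym_adj eq_sym [A (i, j) && _]andbC. Qed.

Lemma sym_adj_irr n (A : {ffun 'I_n * 'I_n -> bool}) : irreflexive (sym_adj A).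
Proof. by move=> i; rewrite /sym_adj eqxx. Qed.

Definition sgraph_of_ffun n (A : {ffun 'I_n * 'I_n -> bool}) : sgraph :=
  SGraph (@sym_adj_sym n A) (@sym_adj_irr n A).

Definition covered_by_gap_witness k (H : sgraph) : bool :=
  [exists X, exists Y, gap_witness (@sg_adj H) k X Y && (X :|: Y == setT)].

(* Every graph on ['I_n] is [sgraph_of_ffun A] for some [A], so enumerating the
   finite functions [A] enumerates the graphs on ['I_n]. *)
Definition gap_obstructions k : list sgraph :=
  List.flat_map (fun n => List.filter (covered_by_gap_witness k)
     (List.map (@sgraph_of_ffun n) (enum {ffun 'I_n * 'I_n -> bool})))
  (List.seq 0 (3 * k + 4)).

Lemma gap_obstructions_covered k H :
  List.In H (gap_obstructions k) -> covered_by_gap_witness k H.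
Proof. by case/List.in_flat_map => n [_ /List.filter_In []]. Qed.

Lemma sgraph_of_ffun_in_obstructions k n (A : {ffun 'I_n * 'I_n -> bool}) :
  n <= 3 * k + 3 -> covered_by_gap_witness k (sgraph_of_ffun A) ->
  List.In (sgraph_of_ffun A) (gap_obstructions k).
Proof.
move=> le_n cov; apply/List.in_flat_map; exists n; split.
  by apply/List.in_seq; lia.
by apply/List.filter_In; split; first apply/List.in_map/mem_ListIn; rewrite ?mem_enum.
Qed.

Lemma covered_bipartite k H : covered_by_gap_witness k H -> bipartite H.
Proof.
case/existsP => X /existsP [Y /andP [/and4P [iX iY _ _] /eqP cov]].
have inY z : z \notin X -> z \in Y.
  have : z \in X :|: Y by rewrite cov inE.
  by rewrite inE => /orP [->|].
exists (mem X) => x y exy; apply: contraTneq exy => /= sameX.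
have [xX | xNX] := boolP (x \in X); first by rewrite (indepF iX xX) // -sameX.
by rewrite (indepF iY (inY x xNX)) // inY // -sameX.
Qed.

Section InducedSubgraph.
Variables (T : finType) (e : rel T).
Hypothesis e_sym : symmetric e.
Hypothesis e_irr : irreflexive e.

Definition induced_sgraph (S : {set T}) : sgraph :=
  sgraph_of_ffun [ffun p : 'I_#|S| * 'I_#|S| => e (enum_val p.1) (enum_val p.2)].

Lemma induced_sgraph_adj (S : {set T}) (i j : 'I_#|S|) :
  e (enum_val i) (enum_val j) = @sg_adj (induced_sgraph S) i j.
Proof.
rewrite /= /sym_adj !ffunE /= e_sym andbb.
by have [-> | //] := eqVneq i j; rewrite e_irr.
Qed.

Lemma induced_copy_induced_sgraph (S : {set T}) : induced_copy e (induced_sgraph S).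
Proof. by exists enum_val; split; [exact: enum_val_inj | exact: induced_sgraph_adj]. Qed.

Lemma covered_induced_sgraph k (X Y : {set T}) :
  gap_witness e k X Y -> covered_by_gap_witness k (induced_sgraph (X :|: Y)).
Proof.
set S := X :|: Y => wXY; have ev_inj := @enum_val_inj _ (mem S).
have sS : S \subset codom (@enum_val _ (mem S)).
  by apply/subsetP => x xS; apply/codomP; exists (enum_rank_in xS x); rewrite enum_rankK_in.
apply/existsP; exists (enum_val @^-1: X); apply/existsP; exists (enum_val @^-1: Y).
rewrite -(gap_witness_imset ev_inj (@induced_sgraph_adj S)).
rewrite !imset_preimset ?wXY ?(subset_trans _ sS) ?subsetUl ?subsetUr //=.
by apply/eqP/setP => i; rewrite !inE -in_setU enum_valP.
Qed.

End InducedSubgraph.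

Theorem mainTheorem15 :
  forall k : nat, exists F : list sgraph,
    (forall H, List.In H F -> bipartite H) /\
    (forall (T : finType) (e : rel T), symmetric e -> irreflexive e ->
       (her_mu_alpha e <= k <-> graph_free e F)).
Proof.
move=> k; exists (gap_obstructions k); split.
  by move=> H /gap_obstructions_covered /covered_bipartite.
move=> T e e_sym e_irr; split.
  move=> le_her H /gap_obstructions_covered /existsP [X /existsP [Y /andP [wXY _]]].
  case=> f [f_inj f_adj]; rewrite -(gap_witness_imset f_inj f_adj) in wXY.
  by have := gap_witness_her_gt e_sym e_irr wXY; rewrite ltnNge le_her.
move=> free; rewrite leqNgt; apply/negP => /(her_gt_gap_witness e_sym e_irr) [X [Y]].
case/gap_witness_small => X' [Y' [wXY small]].
apply: (free (induced_sgraph e (X' :|: Y'))); last exact: induced_copy_induced_sgraph.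
apply: sgraph_of_ffun_in_obstructions (covered_induced_sgraph e_sym e_irr wXY).
exact: leq_trans (leq_card_setU _ _) small.
Qed.
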